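(* Let $f:\mathbb{R}^{n\times n}\to\mathbb{R}$ be differentiable. Let $f^*=\min_{X\in\Pi_n} f(X)$ and $\underline{f}=\min_{X\in\mathcal{D}_n} f(X)$. Suppose $\sigma>\frac12(f^*-\underline{f})$. Then any global minimizer $X(\sigma)$ of \[ \min_{X\in\mathcal{D}_n}\ f(X)+\sigma\|X\|_0 \] is also a global minimizer of $\min_{X\in\Pi_n} f(X)$.
   Context: $\Pi_n=\{X\in\mathbb{R}^{n\times n}: X\mathbf{e}=X^{\mathsf T}\mathbf{e}=\mathbf{e},\ X_{ij}\in\{0,1\}\}$ is the set of $n\times n$ permutation matrices, $\mathcal{D}_n=\{X\in\mathbb{R}^{n\times n}: X\mathbf{e}=X^{\mathsf T}\mathbf{e}=\mathbf{e},\ X\ge 0\}$ is the set of doubly stochastic matrices (entrywise inequality), $\mathbf{e}$ is the all-ones vector, and $\|X\|_0$ is the number of nonzero entries of $X$. *)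

From HB Require Import structures.
From mathcomp Require Import all_boot all_order all_algebra.
From mathcomp Require Import all_classical all_reals all_analysis.
Set Implicit Arguments. Unset Strict Implicit. Unset Printing Implicit Defensive.
Import Order.TTheory GRing.Theory Num.Theory.
Local Open Scope ring_scope.

Definition doubly_stochastic (R : realType) (n : nat) (X : 'M[R]_n) : Prop :=
  (forall i j, 0 <= X i j) /\
  (forall i, \sum_(j < n) X i j = 1) /\
  (forall j, \sum_(i < n) X i j = 1).

Definition perm_matrix (R : realType) (n : nat) (X : 'M[R]_n) : Prop :=
  (forall i j, X i j = 0 \/ X i j = 1) /\
  (forall i, \sum_(j < n) X i j = 1) /\
  (forall j, \sum_(i < n) X i j = 1).

Definition l0norm (R : realType) (n : nat) (X : 'M[R]_n) : nat :=
  #|[set ij : 'I_n * 'I_n | X ij.1 ij.2 != 0]|.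

From HB Require Import structures.
From mathcomp Require Import all_boot all_order all_algebra.
From mathcomp Require Import all_classical all_reals all_analysis.
From mathcomp Require Import lra zify.
Set Implicit Arguments. Unset Strict Implicit. Unset Printing Implicit Defensive.
Import Order.TTheory GRing.Theory Num.Theory numFieldNormedType.Exports.
Local Open Scope ring_scope.

(* Every row of a doubly stochastic matrix has a nonzero entry, so its l0 norm
   is at least n, with equality for permutation matrices.  If a doubly
   stochastic matrix is not a permutation matrix, it has an entry strictly
   between 0 and 1; the rest of that column carries the mass left over, so the
   column contains a second such entry, and the two rows through these entries
   have at least two nonzeros each: the l0 norm is then at least n + 2.  Hence
   replacing a non-permutation minimiser by an optimal permutation matrix saves
   at least 2 sigma in the penalty while losing at most f* - f_ in the
   objective. *)

Section Support.
Variables (R : numDomainType) (I : finType).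
Implicit Type F : I -> R.

Lemma card_support_pair (J : finType) (F : I -> J -> R) :
  #|support (fun p : I * J => F p.1 p.2)| = (\sum_i #|support (F i)|)%N.
Proof.
transitivity (\sum_i \sum_(j | F i j != 0%R) 1)%N.
  by rewrite pair_big_dep -sum1_card; apply: eq_bigl => p; rewrite !inE.
by apply: eq_bigr => i _; rewrite -sum1_card; apply: eq_bigl => j; rewrite !inE.
Qed.

Lemma sum01_card_support F :
  (forall k, F k = 0 \/ F k = 1) -> \sum_k F k = #|support F|%:R.
Proof.
move=> F01; rewrite -sum1_card natr_sum [RHS]big_mkcond /=.
by apply: eq_bigr => k _; rewrite !inE; case: (F01 k) => ->; rewrite ?eqxx ?oner_eq0.
Qed.

Lemma card_support_gt0 F : \sum_k F k = 1 -> (0 < #|support F|)%N.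
Proof.
move=> F1; apply/card_gt0P.
have [k Fk0] : exists k, F k != 0.
  apply/existsP; apply: contra_eqT F1 => /existsPn F0.
  rewrite big1 1?eq_sym ?oner_eq0 // => k _.
  by move: (F0 k); rewrite negbK => /eqP.
by exists k; rewrite inE.
Qed.

Lemma card_support_gt1 F j :
  \sum_k F k = 1 -> F j != 0 -> F j != 1 -> (1 < #|support F|)%N.
Proof.
move=> F1 Fj0 Fj1; apply/card_gt1P.
have [k /andP[kj Fk0]] : exists k, (k != j) && (F k != 0).
  apply/existsP; apply: contraNT Fj1 => /existsPn F0.
  rewrite -F1 (bigD1 j) //= big1 ?addr0 // => k kj.
  by move: (F0 k); rewrite kj /= negbK => /eqP.
by exists j, k; rewrite !inE Fj0 Fk0 eq_sym.
Qed.

End Support.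

Section Stochastic.
Variables (R : realDomainType) (I : finType) (F : I -> R).
Hypotheses (F_ge0 : forall k, 0 <= F k) (F_sum1 : \sum_k F k = 1).

Lemma stochastic_fractional_pair i :
  F i != 0 -> F i != 1 -> exists2 k, k != i & (F k != 0) && (F k != 1).
Proof.
move=> Fi0 Fi1.
have Fi_gt0 : 0 < F i by rewrite lt_def Fi0 F_ge0.
have rest : F i + \sum_(k | k != i) F k = 1 by rewrite -F_sum1 [RHS](bigD1 i).
have [k /andP[ki Fk_gt0]] : exists k, (k != i) && (0 < F k).
  apply: psumr_neq0P => [k _|rest0]; first exact: F_ge0.
  by move: Fi1; rewrite -rest rest0 addr0 eqxx.
have Fk_le : F k <= \sum_(l | l != i) F l.
  by rewrite (bigD1 k) //= lerDl sumr_ge0.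
exists k => //; rewrite gt_eqF //=; apply/eqP => Fk1; lra.
Qed.

End Stochastic.

Lemma sum_ge_card_add2 (I : finType) (F : I -> nat) i1 i2 :
  (forall i, 0 < F i)%N -> i1 != i2 -> (1 < F i1)%N -> (1 < F i2)%N ->
  (#|I| + 2 <= \sum_i F i)%N.
Proof.
move=> F_gt0 i12 F1 F2.
have -> : (\sum_i F i = \sum_i (1 + (F i).-1))%N.
  by apply: eq_bigr => i _; rewrite add1n prednK.
rewrite big_split sum1_card leq_add2l (bigD1 i1) // (bigD1 i2) 1?eq_sym //=.
lia.
Qed.

Section L0norm.
Variables (R : realType) (n : nat).
Implicit Types X P : 'M[R]_n.

Lemma l0norm_row_sum X : l0norm X = (\sum_i #|support (X i)|)%N.
Proof. by rewrite -card_support_pair; apply: eq_card => p; rewrite !inE. Qed.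

Lemma perm_matrix_doubly_stochastic P : perm_matrix P -> doubly_stochastic P.
Proof. by move=> [P01 rows_cols]; split=> // i j; case: (P01 i j) => ->. Qed.

Lemma l0norm_perm_matrix P : perm_matrix P -> l0norm P = n.
Proof.
move=> [P01 [Prow _]]; rewrite l0norm_row_sum -[RHS]card_ord -sum1_card.
by apply: eq_bigr => i _; apply/eqP; rewrite -(eqr_nat R) -sum01_card_support ?Prow.
Qed.

Lemma l0norm_doubly_stochastic X : doubly_stochastic X -> (n <= l0norm X)%N.
Proof.
move=> [_ [Xrow _]]; rewrite l0norm_row_sum -{1}(card_ord n) -sum1_card.
by apply: leq_sum => i _; apply: card_support_gt0.
Qed.

Lemma not_perm_matrix_fractional X :
  doubly_stochastic X -> ~ perm_matrix X ->
  exists i j, (X i j != 0) && (X i j != 1).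
Proof.
move=> [_ rows_cols] notP.
have /existsP[i /existsP[j Xij]] : [exists i, exists j, (X i j != 0) && (X i j != 1)].
  apply: contra_notT notP => /existsPn noX; split=> // i j.
  by move/existsPn/(_ j): (noX i); rewrite negb_and !negbK => /orP[]/eqP; [left|right].
by exists i, j.
Qed.

Lemma l0norm_not_perm_matrix X :
  doubly_stochastic X -> ~ perm_matrix X -> (n + 2 <= l0norm X)%N.
Proof.
move=> dsX notP; have [X_ge0 [Xrow Xcol]] := dsX.
have [i [j /andP[Xij0 Xij1]]] := not_perm_matrix_fractional dsX notP.
have [k ki /andP[Xkj0 Xkj1]] :=
  stochastic_fractional_pair (fun k => X_ge0 k j) (Xcol j) Xij0 Xij1.
rewrite l0norm_row_sum -{1}(card_ord n).
apply: (sum_ge_card_add2 _ ki).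
- by move=> l; apply: card_support_gt0.
- exact: card_support_gt1 (Xrow k) Xkj0 Xkj1.
- exact: card_support_gt1 (Xrow i) Xij0 Xij1.
Qed.

End L0norm.

Theorem lemma3p1 (R : realType) (n : nat) (f : 'M[R]_n -> R)
  (fstar flow sigma : R) (Xs : 'M[R]_n) :
  (forall X : 'M[R]_(n, n), differentiable f X) ->
  (* fstar = min over permutation matrices of f *)
  (exists P : 'M[R]_n, perm_matrix P /\ f P = fstar) ->
  (forall P : 'M[R]_n, perm_matrix P -> fstar <= f P) ->
  (* flow = min over doubly stochastic matrices of f *)
  (exists D : 'M[R]_n, doubly_stochastic D /\ f D = flow) ->
  (forall D : 'M[R]_n, doubly_stochastic D -> flow <= f D) ->
  sigma > (fstar - flow) / 2 ->
  doubly_stochastic Xs ->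
  (forall Y : 'M[R]_n, doubly_stochastic Y ->
     f Xs + sigma * (l0norm Xs)%:R <= f Y + sigma * (l0norm Y)%:R) ->
  perm_matrix Xs /\ (forall P : 'M[R]_n, perm_matrix P -> f Xs <= f P).
Proof.
move=> _ [P [Pperm fP]] _ _ flow_min gap Xs_ds Xs_opt.
have flow_le : flow <= fstar.
  by rewrite -fP; apply/flow_min/perm_matrix_doubly_stochastic.
have Xs_perm : perm_matrix Xs.
  apply: contrapT => notP.
  have opt_vs_P := Xs_opt P (perm_matrix_doubly_stochastic Pperm).
  have fXs_ge := flow_min _ Xs_ds.
  have penalty_gap : sigma * (n + 2)%N%:R <= sigma * (l0norm Xs)%:R.
    by rewrite ler_wpM2l ?ler_nat ?l0norm_not_perm_matrix //; lra.
  move: opt_vs_P penalty_gap; rewrite (l0norm_perm_matrix Pperm) natrD mulrDr.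
  lra.
split=> // Q Qperm.
have := Xs_opt Q (perm_matrix_doubly_stochastic Qperm).
by rewrite !l0norm_perm_matrix // lerD2r.
Qed.
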